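(* Let $d_1\ge d_2\ge d_3\ge 2$ be integers and let $k=d_2d_3-d_1$. If $k>1$, then $\mathbb{C}^{d_1}\otimes\mathbb{C}^{d_2}\otimes\mathbb{C}^{d_3}$ contains two SLOCC maximal states $|\Phi\rangle,|\Psi\rangle$ that are incomparable under $\le_{\mathrm{SLOCC}}$, i.e. neither $|\Phi\rangle\le_{\mathrm{SLOCC}}|\Psi\rangle$ nor $|\Psi\rangle\le_{\mathrm{SLOCC}}|\Phi\rangle$.
   Context: $|\psi\rangle\le_{\mathrm{SLOCC}}|\phi\rangle$ means $(L_1\otimes L_2\otimes L_3)|\phi\rangle=|\psi\rangle$ for some linear operators $L_i$ on $\mathbb{C}^{d_i}$. A state $|\phi\rangle$ is SLOCC maximal if for every $|\psi\rangle$ in the space, $|\phi\rangle\le_{\mathrm{SLOCC}}|\psi\rangle$ implies $|\psi\rangle\le_{\mathrm{SLOCC}}|\phi\rangle$. *)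

From HB Require Import structures.
From mathcomp Require Import all_boot all_order all_algebra.
Set Implicit Arguments. Unset Strict Implicit. Unset Printing Implicit Defensive.
Import GRing.Theory Num.Theory.
Local Open Scope ring_scope.

Definition tensor3 (C : numClosedFieldType) (d1 d2 d3 : nat) :=
  {ffun 'I_d1 * 'I_d2 * 'I_d3 -> C}.

Definition tapply (C : numClosedFieldType) (d1 d2 d3 : nat)
  (L1 : 'M[C]_d1) (L2 : 'M[C]_d2) (L3 : 'M[C]_d3)
  (phi : tensor3 C d1 d2 d3) : tensor3 C d1 d2 d3 :=
  [ffun ijk : 'I_d1 * 'I_d2 * 'I_d3 =>
     \sum_(a < d1) \sum_(b < d2) \sum_(c < d3)
       L1 ijk.1.1 a * L2 ijk.1.2 b * L3 ijk.2 c * phi (a, b, c)].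

Definition slocc_le (C : numClosedFieldType) (d1 d2 d3 : nat)
  (psi phi : tensor3 C d1 d2 d3) : Prop :=
  exists (L1 : 'M[C]_d1) (L2 : 'M[C]_d2) (L3 : 'M[C]_d3),
    tapply L1 L2 L3 phi = psi.

Definition slocc_maximal (C : numClosedFieldType) (d1 d2 d3 : nat)
  (phi : tensor3 C d1 d2 d3) : Prop :=
  forall psi : tensor3 C d1 d2 d3, slocc_le phi psi -> slocc_le psi phi.

From HB Require Import structures.
From mathcomp Require Import all_boot all_order all_algebra.
From mathcomp Require Import zify ring.
Set Implicit Arguments. Unset Strict Implicit. Unset Printing Implicit Defensive.
Import GRing.Theory Num.Theory.
Local Open Scope ring_scope.

(* The proof rests on conciseness: a tensor is concise when none of its three
   flattenings has a nonzero left kernel vector.  If (L1 (x) L2 (x) L3) T is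
   concise then every L_i is invertible.  Consequently a concise tensor is
   SLOCC maximal, and two concise tensors are SLOCC comparable only if one is
   the image of the other under invertible local operators.

   Phi sends the slice (b, c) to the
   basis vector e_a with a + k = ((b + c) mod d3) d2 + b; Psi is the
   "identity" tensor on the cells c d2 + b < d1, plus e_0 (x) e_c (x) e_c for
   0 < c < d3.  Assuming M Psi = Phi with M invertible, each slice of Phi
   with b < k and b + c = 0 mod d3 vanishes, and pulling it back through M
   shows that the corresponding row of M3 vanishes on all columns j with
   (j + 1) d2 <= d1.  These zeros either fill a column of M3 (when k >= d3)
   or confine two rows of M3 to a single column (when k < d3), contradicting
   the invertibility of M3. *)

Section LocalOperators.

Variables (C : numClosedFieldType) (d1 d2 d3 : nat).
Implicit Types (phi psi T : tensor3 C d1 d2 d3).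

Lemma sum_triple (F : 'I_d1 -> 'I_d2 -> 'I_d3 -> C) :
  \sum_a \sum_b \sum_c F a b c =
  \sum_(q : 'I_d1 * 'I_d2 * 'I_d3) F q.1.1 q.1.2 q.2.
Proof. by rewrite pair_bigA pair_bigA. Qed.

Lemma tapplyE (L1 : 'M[C]_d1) (L2 : 'M[C]_d2) (L3 : 'M[C]_d3) phi p :
  tapply L1 L2 L3 phi p =
  \sum_(q : 'I_d1 * 'I_d2 * 'I_d3)
     L1 p.1.1 q.1.1 * L2 p.1.2 q.1.2 * L3 p.2 q.2 * phi q.
Proof. by rewrite ffunE sum_triple; apply: eq_bigr => -[[a b] c]. Qed.

Lemma mulr_sum3 (A : 'I_d1 -> C) (B : 'I_d2 -> C) (D : 'I_d3 -> C) (x : C) :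
  (\sum_a A a) * (\sum_b B b) * (\sum_c D c) * x =
  \sum_(q : 'I_d1 * 'I_d2 * 'I_d3) A q.1.1 * B q.1.2 * D q.2 * x.
Proof.
rewrite -(sum_triple (fun a b c => A a * B b * D c * x)) -!mulrA big_distrl /=.
apply: eq_bigr => a _.
rewrite big_distrl big_distrr /=; apply: eq_bigr => b _.
by rewrite big_distrl !big_distrr /=; apply: eq_bigr => c _; rewrite !mulrA.
Qed.

Lemma tapply_comp (M1 L1 : 'M[C]_d1) (M2 L2 : 'M[C]_d2) (M3 L3 : 'M[C]_d3) phi :
  tapply M1 M2 M3 (tapply L1 L2 L3 phi) =
  tapply (M1 *m L1) (M2 *m L2) (M3 *m L3) phi.
Proof.
apply/ffunP => p; rewrite !tapplyE.
under eq_bigr => q _ do rewrite tapplyE big_distrr /=.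
rewrite exchange_big /=; apply: eq_bigr => r _.
rewrite !mxE mulr_sum3; apply: eq_bigr => q _; ring.
Qed.

Lemma tapply1 phi : tapply 1%:M 1%:M 1%:M phi = phi.
Proof.
apply/ffunP => p; rewrite tapplyE (bigD1 p) //= !mxE !eqxx !mulr1 mul1r.
rewrite big1 ?addr0 // => -[[a b] c]; case: p => [[a' b'] c'] /= ne.
rewrite !mxE; case: (a' =P a) ne => [<-|_ _]; last by rewrite !mul0r.
case: (b' =P b) => [<-|_ _]; last by rewrite mulr0 !mul0r.
by case: (c' =P c) => [<-|_ _]; [rewrite eqxx | rewrite mulr0 mul0r].
Qed.

Definition concise1 T := forall v : 'rV[C]_d1,
  (forall b c, \sum_a v 0 a * T (a, b, c) = 0) -> v = 0.
Definition concise2 T := forall v : 'rV[C]_d2,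
  (forall a c, \sum_b v 0 b * T (a, b, c) = 0) -> v = 0.
Definition concise3 T := forall v : 'rV[C]_d3,
  (forall a b, \sum_c v 0 c * T (a, b, c) = 0) -> v = 0.
Definition concise T := [/\ concise1 T, concise2 T & concise3 T].

Lemma sum_orthogonal_span (I J : finType) (f : I -> C) (g : I -> J -> C)
    (h : J -> C) (F : I -> C) :
  (forall j, \sum_i f i * g i j = 0) -> (forall i, F i = \sum_j g i j * h j) ->
  \sum_i f i * F i = 0.
Proof.
move=> fg0 defF; under eq_bigr => i _ do rewrite defF big_distrr.
rewrite exchange_big /=; apply: big1 => j _.
by under eq_bigr => i _ do rewrite mulrA; rewrite -big_distrl /= fg0 mul0r.
Qed.

(* Each operator producing a concise tensor must be invertible: a left
   kernel vector of L_i would be a left kernel vector of a flattening. *)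
Lemma concise_tapply_unitmx (L1 : 'M[C]_d1) (L2 : 'M[C]_d2) (L3 : 'M[C]_d3) T :
  concise (tapply L1 L2 L3 T) -> [/\ L1 \in unitmx, L2 \in unitmx & L3 \in unitmx].
Proof.
have unitP n (L : 'M[C]_n) : (forall v : 'rV_n, v *m L = 0 -> v = 0) -> L \in unitmx.
  move=> kerL; rewrite -row_free_unit -kermx_eq0; apply/eqP/row_matrixP => i.
  by rewrite row0; apply: kerL; rewrite -row_mul mulmx_ker row0.
have entry0 n (L : 'M[C]_n) v j : v *m L = 0 -> \sum_i v 0 i * L i j = 0.
  by move/matrixP/(_ 0 j); rewrite !mxE.
case=> c1 c2 c3; split; apply: unitP => v /entry0 vL.
- apply: c1 => b c; apply: (@sum_orthogonal_span _ _ _ (fun a q => L1 a q.1.1)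
    (fun q => L2 b q.1.2 * L3 c q.2 * T q)) => [q|a]; first exact: vL.
  by rewrite tapplyE; apply: eq_bigr => q _; ring.
- apply: c2 => a c; apply: (@sum_orthogonal_span _ _ _ (fun b q => L2 b q.1.2)
    (fun q => L1 a q.1.1 * L3 c q.2 * T q)) => [q|b]; first exact: vL.
  by rewrite tapplyE; apply: eq_bigr => q _; ring.
- apply: c3 => a b; apply: (@sum_orthogonal_span _ _ _ (fun c q => L3 c q.2)
    (fun q => L1 a q.1.1 * L2 b q.1.2 * T q)) => [q|c]; first exact: vL.
  by rewrite tapplyE; apply: eq_bigr => q _; ring.
Qed.

(* A concise tensor is SLOCC maximal: anything it is obtained from is
   recovered from it by the inverse operators. *)
Lemma concise_slocc_maximal T : concise T -> slocc_maximal T.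
Proof.
move=> cT psi [L1 [L2 [L3 defT]]]; rewrite -defT in cT.
have [u1 u2 u3] := concise_tapply_unitmx cT.
exists (invmx L1), (invmx L2), (invmx L3).
by rewrite -defT tapply_comp !mulVmx // tapply1.
Qed.

Lemma concise_incomparable phi psi :
  concise phi -> concise psi ->
  (forall (M1 : 'M[C]_d1) (M2 : 'M[C]_d2) (M3 : 'M[C]_d3),
      M1 \in unitmx -> M2 \in unitmx -> M3 \in unitmx ->
      tapply M1 M2 M3 psi <> phi) ->
  ~ slocc_le phi psi /\ ~ slocc_le psi phi.
Proof.
move=> cphi cpsi no_orbit; split=> -[L1 [L2 [L3 defT]]].
  by rewrite -defT in cphi; have [u1 u2 u3] := concise_tapply_unitmx cphi;
    exact: no_orbit defT.
rewrite -defT in cpsi; have [u1 u2 u3] := concise_tapply_unitmx cpsi.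
apply: (no_orbit (invmx L1) (invmx L2) (invmx L3)); rewrite ?unitmx_inv //.
by rewrite -defT tapply_comp !mulVmx // tapply1.
Qed.

End LocalOperators.

Lemma sum_single (R : nmodType) (I : finType) (F : I -> R) (i0 : I) :
  (forall i, i != i0 -> F i = 0) -> \sum_i F i = F i0.
Proof. by move=> F0; rewrite (bigD1 i0) //= big1 ?addr0 // => i /F0. Qed.

Lemma digits_inj (x y b b' d : nat) : (b < d)%N -> (b' < d)%N ->
  (x * d + b = y * d + b')%N -> x = y /\ b = b'.
Proof.
move=> bd b'd E; have Eb : b = b'.
  by have := congr1 (modn^~ d) E; rewrite /= !modnMDl !modn_small.
by split=> //; move: E; rewrite Eb => /addIn /eqP; rewrite eqn_pmul2r; [move/eqP | lia].
Qed.

Lemma modn_shift (b s d : nat) : (0 < d)%N -> (s < d)%N ->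
  ((b + (s + (d - b %% d)) %% d) %% d = s)%N.
Proof.
move=> d0 sd; rewrite modnDmr {1}(divn_eq b d) -addnA (addnCA (b %% d)%N).
by rewrite subnKC ?(ltnW (ltn_pmod b d0)) // modnMDl modnDr modn_small.
Qed.

Section InvertibleMatrices.

Variables (R : fieldType) (n : nat).
Implicit Types A : 'M[R]_n.

Lemma unitmx_row_nonzero A i : A \in unitmx -> ~ (forall j, A i j = 0).
Proof.
move=> uA Ai0; have : row i A *m invmx A = 0.
  by rewrite (_ : row i A = 0) ?mul0mx //; apply/rowP => j; rewrite !mxE.
by rewrite -row_mul mulmxV // => /rowP /(_ i); rewrite !mxE eqxx => /eqP; rewrite oner_eq0.
Qed.

Lemma unitmx_col_nonzero A j : A \in unitmx -> ~ (forall i, A i j = 0).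
Proof.
by move=> uA Aj0; apply: (@unitmx_row_nonzero A^T j); rewrite ?unitmx_tr // => i; rewrite mxE.
Qed.

(* Two distinct rows of an invertible matrix cannot both be supported in a
   single column j0: they would be proportional. *)
Lemma unitmx_rows_one_column A i i' j0 : A \in unitmx -> i != i' ->
  (forall j, j != j0 -> A i j = 0 /\ A i' j = 0) -> False.
Proof.
move=> uA ne supp.
pose v := A i' j0 *: delta_mx 0 i - A i j0 *: delta_mx 0 i' : 'rV[R]_n.
have vA : v *m A = 0.
  apply/rowP => j; rewrite mulmxBl -!scalemxAl -!rowE !mxE.
  have [->|/supp [-> ->]] := eqVneq j j0; first by rewrite mulrC subrr.
  by rewrite !mulr0 subrr.
have /rowP /(_ i') : v = 0 by rewrite -(mulmxK uA v) vA mul0mx.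
rewrite !mxE !eqxx eq_sym (negbTE ne) andbF andbT mulr0 mulr1 sub0r => /eqP.
rewrite oppr_eq0 => /eqP Aij0.
apply: (unitmx_row_nonzero (i := i) uA) => j.
by have [->|/supp []] := eqVneq j j0.
Qed.

End InvertibleMatrices.

Section Construction.

Variables (C : numClosedFieldType) (d1 d2 d3 : nat).
Hypotheses (d3_ge2 : (2 <= d3)%N) (d3_le_d2 : (d3 <= d2)%N)
  (d2_le_d1 : (d2 <= d1)%N) (k_gt1 : (1 < d2 * d3 - d1)%N).

(* Phi maps the slice (b, c) to the basis vector e_a, where a + k has base-d2
   digits ((b + c) mod d3, b); the slices whose cell index falls below
   k = d2 d3 - d1 vanish. *)
Definition Phi : tensor3 C d1 d2 d3 :=
  [ffun p : 'I_d1 * 'I_d2 * 'I_d3 =>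
     ((((p.1.2 + p.2) %% d3) * d2 + p.1.2 == p.1.1 + (d2 * d3 - d1))%N)%:R].

Lemma Phi_cell_onto n : (n < d2 * d3)%N ->
  exists (b : 'I_d2) (c : 'I_d3), (((b + c) %% d3) * d2 + b = n)%N.
Proof.
move=> n_lt; have d2p : (0 < d2)%N by lia.
have d3p : (0 < d3)%N by lia.
have hi_lt : (n %/ d2 < d3)%N by rewrite ltn_divLR // mulnC.
exists (Ordinal (ltn_pmod n d2p)).
exists (Ordinal (ltn_pmod (n %/ d2 + (d3 - (n %% d2) %% d3))%N d3p)).
by rewrite /= modn_shift // [RHS](divn_eq n d2).
Qed.

(* Every basis vector e_a is a slice of Phi. *)
Lemma Phi_concise1 : concise1 Phi.
Proof.
move=> v vPhi; apply/rowP => a0; rewrite mxE.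
have [b [c cell]] : exists (b : 'I_d2) (c : 'I_d3),
    (((b + c) %% d3) * d2 + b = a0 + (d2 * d3 - d1))%N.
  by apply: Phi_cell_onto; have := ltn_ord a0; lia.
have := vPhi b c; rewrite (sum_single (i0 := a0)) => [|a ne]; rewrite ffunE /= cell.
  by rewrite eqxx mulr1.
suff /negbTE -> : (a0 + (d2 * d3 - d1) != a + (d2 * d3 - d1))%N by rewrite mulr0.
by rewrite eqn_add2r eq_sym.
Qed.

(* The slice (a, c) with cell index (d3 - 1) d2 + b0, i.e. with
   (b0 + c) = d3 - 1 mod d3, is e_b0. *)
Lemma Phi_concise2 : concise2 Phi.
Proof.
move=> v vPhi; apply/rowP => b0; rewrite mxE.
have d3p : (0 < d3)%N by lia.
have [a index_a] : exists a : 'I_d1, (a + (d2 * d3 - d1) = (d3 - 1) * d2 + b0)%N.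
  have a_lt : ((d3 - 1) * d2 + b0 - (d2 * d3 - d1) < d1)%N by have := ltn_ord b0; lia.
  by exists (Ordinal a_lt); have := ltn_ord b0; rewrite /=; lia.
have [c0 top_digit] : exists c0 : 'I_d3, ((b0 + c0) %% d3 = d3 - 1)%N.
  have c0_lt : (d3 - 1 - b0 %% d3 < d3)%N by lia.
  exists (Ordinal c0_lt); rewrite /= {1}(divn_eq b0 d3) -addnA.
  have -> : (b0 %% d3 + (d3 - 1 - b0 %% d3) = d3 - 1)%N by have := ltn_pmod b0 d3p; lia.
  by rewrite modnMDl modn_small //; lia.
have := vPhi a c0; rewrite (sum_single (i0 := b0)) => [|b ne]; rewrite ffunE /= index_a.
  by rewrite top_digit eqxx mulr1.
case: eqP; last by rewrite mulr0.
move/digits_inj => /(_ (ltn_ord b) (ltn_ord b0)) [_ E].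
by move: ne; rewrite -(inj_eq val_inj) /= E eqxx.
Qed.

(* The slice (a, b) with b = d3 - 1 - c0 and cell index (d3 - 1) d2 + b
   is e_c0. *)
Lemma Phi_concise3 : concise3 Phi.
Proof.
move=> v vPhi; apply/rowP => c0; rewrite mxE.
have [b [top_digit [a index_a]]] : exists b : 'I_d2, ((b + c0) %% d3 = d3 - 1)%N /\
    exists a : 'I_d1, (a + (d2 * d3 - d1) = (d3 - 1) * d2 + b)%N.
  have b_lt : (d3 - 1 - c0 < d2)%N by have := ltn_ord c0; lia.
  have a_lt : ((d3 - 1) * d2 + (d3 - 1 - c0) - (d2 * d3 - d1) < d1)%N by lia.
  exists (Ordinal b_lt); split; first by rewrite /= modn_small; have := ltn_ord c0; lia.
  by exists (Ordinal a_lt); rewrite /=; lia.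
have := vPhi a b; rewrite (sum_single (i0 := c0)) => [|c ne]; rewrite ffunE /= index_a.
  by rewrite top_digit eqxx mulr1.
case: eqP; last by rewrite mulr0.
move/digits_inj => /(_ (ltn_ord b) (ltn_ord b)) [E _].
move: ne; rewrite -(inj_eq val_inj) /=.
have : ((b + c) == (b + c0) %[mod d3])%N by rewrite E top_digit.
by rewrite eqn_modDl !modn_small // => ->.
Qed.

Lemma Phi_concise : concise Phi.
Proof. by split; [exact: Phi_concise1 | exact: Phi_concise2 | exact: Phi_concise3]. Qed.

Lemma Phi_slice0 (b : 'I_d2) (c : 'I_d3) :
  (b < d2 * d3 - d1)%N -> ((b + c) %% d3 = 0)%N -> forall a, Phi (a, b, c) = 0.
Proof. by move=> b_lt bc a; rewrite ffunE /= bc mul0n add0n; case: eqP => // E; lia. Qed.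

(* Psi = sum of e_{c d2 + b} (x) e_b (x) e_c over the cells c d2 + b < d1
   (the "identity" part), plus e_0 (x) e_c (x) e_c for 0 < c < d3. *)
Definition Psi : tensor3 C d1 d2 d3 :=
  [ffun p : 'I_d1 * 'I_d2 * 'I_d3 =>
    (((p.2 : nat) * d2 + p.1.2 == p.1.1)%N)%:R +
    (((p.1.1 : nat) == 0%N) && ((p.1.2 : nat) == p.2) && (0 < p.2)%N)%:R].

(* The coordinate a0 is seen by the slice (b, c) = (a0 mod d2, a0 / d2) of
   the identity part; the extra part only involves the coordinate a = 0,
   which is handled first through the slice (b, c) = (0, 0), equal to e_0. *)
Lemma Psi_concise1 : concise1 Psi.
Proof.
move=> v vPsi; have d2p : (0 < d2)%N by lia.
have d3p : (0 < d3)%N by lia.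
have v0 (a : 'I_d1) : (a : nat) = 0%N -> v 0 a = 0.
  move=> a0; have := vPsi (Ordinal d2p) (Ordinal d3p).
  rewrite (sum_single (i0 := a)) => [|a' ne]; rewrite ffunE /= ?a0 andbF addr0.
    by rewrite mulr1.
  by case: eqP => [E|]; [move: ne; rewrite -(inj_eq val_inj) /= a0 -E eqxx | rewrite mulr0].
apply/rowP => a0; rewrite mxE.
have c_lt : (a0 %/ d2 < d3)%N by rewrite ltn_divLR // mulnC; have := ltn_ord a0; lia.
have := vPsi (Ordinal (ltn_pmod a0 d2p)) (Ordinal c_lt).
under eq_bigr => a _ do rewrite ffunE mulrDr.
rewrite big_split /= [X in _ + X]big1 => [|a _]; last first.
  by case: (eqVneq (a : nat) 0%N) => [/v0 ->|]; [rewrite mul0r | rewrite mulr0].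
rewrite addr0 (sum_single (i0 := a0)) => [|a ne]; rewrite /= -divn_eq.
  by rewrite eqxx mulr1.
by case: eqP => [E|]; [move: ne; rewrite -(inj_eq val_inj) /= E eqxx | rewrite mulr0].
Qed.

(* The slice (a, c) = (b0, 0) is e_b0 (note b0 < d2 <= d1). *)
Lemma Psi_concise2 : concise2 Psi.
Proof.
move=> v vPsi; have d3p : (0 < d3)%N by lia.
apply/rowP => b0; rewrite mxE.
have a_lt : (b0 < d1)%N by have := ltn_ord b0; lia.
have := vPsi (Ordinal a_lt) (Ordinal d3p).
rewrite (sum_single (i0 := b0)) => [|b ne]; rewrite ffunE /= andbF addr0.
  by rewrite eqxx mulr1.
case: eqP => [E|]; last by rewrite mulr0.
by move: ne; rewrite -(inj_eq val_inj) /= -E mul0n add0n eqxx.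
Qed.

(* The slice (a, b) = (0, 0) is e_0, and for 0 < c0 the slice (a, b) = (0, c0)
   is e_c0. *)
Lemma Psi_concise3 : concise3 Psi.
Proof.
move=> v vPsi; have d2p : (0 < d2)%N by lia.
have d1p : (0 < d1)%N by lia.
apply/rowP => c0; rewrite mxE; case: (posnP c0) => [c00|c0p].
  have := vPsi (Ordinal d1p) (Ordinal d2p).
  rewrite (sum_single (i0 := c0)) => [|c ne]; rewrite ffunE /=.
    by rewrite c00 /= addr0 mulr1.
  have cn : (c : nat) != 0%N by move: ne; rewrite -(inj_eq val_inj) /= c00.
  by rewrite addn0 muln_eq0 (negbTE cn) (negbTE (lt0n_neq0 d2p)) eq_sym (negbTE cn) addr0 mulr0.
have b_lt : (c0 < d2)%N by have := ltn_ord c0; lia.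
have := vPsi (Ordinal d1p) (Ordinal b_lt).
rewrite (sum_single (i0 := c0)) => [|c ne]; rewrite ffunE /=.
  have /negbTE -> : (c0 * d2 + c0 != 0)%N by lia.
  by rewrite eqxx c0p add0r mulr1.
have /negbTE -> : (c * d2 + c0 != 0)%N by lia.
have /negbTE -> : (c0 : nat) != c by move: ne; rewrite -(inj_eq val_inj) /= eq_sym.
by rewrite add0r mulr0.
Qed.

Lemma Psi_concise : concise Psi.
Proof. by split; [exact: Psi_concise1 | exact: Psi_concise2 | exact: Psi_concise3]. Qed.

(* Contract Psi on its last two factors against x (x) z.  If the resulting
   vector vanishes, then x_b z_j = 0 for every nonzero cell j d2 + b < d1,
   since the coordinate a = j d2 + b only sees the identity part. *)
Lemma Psi_contract_cell (x : 'I_d2 -> C) (z : 'I_d3 -> C) :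
  (forall a, \sum_b \sum_c x b * z c * Psi (a, b, c) = 0) ->
  forall (b : 'I_d2) (j : 'I_d3), (j * d2 + b != 0)%N -> (j * d2 + b < d1)%N ->
  x b * z j = 0.
Proof.
move=> xzPsi b j nz lt; have := xzPsi (Ordinal lt).
rewrite (sum_single (i0 := b)) => [|b' ne].
  rewrite (sum_single (i0 := j)) => [|c ne]; rewrite ffunE /= (negbTE nz) /= addr0.
    by rewrite eqxx mulr1.
  case: eqP; last by rewrite mulr0.
  move/digits_inj => /(_ (ltn_ord b) (ltn_ord b)) [E _].
  by move: ne; rewrite -(inj_eq val_inj) /= E eqxx.
apply: big1 => c _; rewrite ffunE /= (negbTE nz) /= addr0.
case: eqP; last by rewrite mulr0.
move/digits_inj => /(_ (ltn_ord b') (ltn_ord b)) [_ E].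
by move: ne; rewrite -(inj_eq val_inj) /= E eqxx.
Qed.

(* If x != 0 and the contraction of Psi against x (x) z vanishes, then z
   vanishes on every j whose whole block of cells j d2 + [0, d2) lies below
   d1.  Only the cell 0 is special; it is handled through the coordinate
   a = 0, where the extra part of Psi is invisible when x is supported at 0. *)
Lemma Psi_contract_support (x : 'I_d2 -> C) (z : 'I_d3 -> C) (b1 : 'I_d2) :
  x b1 != 0 ->
  (forall a, \sum_b \sum_c x b * z c * Psi (a, b, c) = 0) ->
  forall j : 'I_d3, (j.+1 * d2 <= d1)%N -> z j = 0.
Proof.
move=> xb1 xzPsi j j_le.
have cell_zero (b : 'I_d2) : x b != 0 -> (j * d2 + b != 0)%N -> z j = 0.
  move=> xb nz; have lt : (j * d2 + b < d1)%N by have := ltn_ord b; move: j_le; rewrite mulSn; lia.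
  by move/eqP: (Psi_contract_cell xzPsi nz lt); rewrite mulf_eq0 (negbTE xb) => /eqP.
have [cell0|] := eqVneq (j * d2 + b1)%N 0%N; last exact: cell_zero.
have [j0 b10] : (j : nat) = 0%N /\ (b1 : nat) = 0%N by have := ltn_ord b1; nia.
have [b /andP [b_pos xb]|x_at0] := pickP [pred b : 'I_d2 | (0 < b)%N && (x b != 0)].
  by apply: (cell_zero b xb); lia.
have d1p : (0 < d1)%N by move: j_le; rewrite mulSn; lia.
have := xzPsi (Ordinal d1p); rewrite (sum_single (i0 := b1)) => [|b ne].
  rewrite (sum_single (i0 := j)) => [|c ne]; rewrite ffunE /= b10.
    rewrite j0 eqxx addr0 mulr1 => /eqP.
    by rewrite mulf_eq0 (negbTE xb1) => /eqP.
  have cn : (c : nat) != 0%N by move: ne; rewrite -(inj_eq val_inj) /= j0.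
  have /negbTE -> : (c * d2 + 0 != 0)%N by have := ltn_ord b1; lia.
  by rewrite eq_sym (negbTE cn) addr0 mulr0.
have b_pos : (0 < b)%N by move: ne; rewrite -(inj_eq val_inj) /= b10 lt0n.
by apply: big1 => c _; move: (x_at0 b); rewrite /= b_pos /= => /negbFE/eqP ->; rewrite !mul0r.
Qed.

(* Suppose M Psi = Phi with M1, M2 invertible.  The vanishing slice (b0, c0)
   of Phi pulls back to a vanishing contraction of Psi against
   (row b0 of M2) (x) (row c0 of M3), so row c0 of M3 vanishes on every j
   with (j + 1) d2 <= d1. *)
Lemma transform_row_zeros (M1 : 'M[C]_d1) (M2 : 'M[C]_d2) (M3 : 'M[C]_d3)
    (b0 : 'I_d2) (c0 : 'I_d3) :
  M1 \in unitmx -> M2 \in unitmx -> tapply M1 M2 M3 Psi = Phi ->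
  (b0 < d2 * d3 - d1)%N -> ((b0 + c0) %% d3 = 0)%N ->
  forall j : 'I_d3, (j.+1 * d2 <= d1)%N -> M3 c0 j = 0.
Proof.
move=> u1 u2 MPsi b0_lt b0c0.
pose y := \col_a \sum_b \sum_c M2 b0 b * M3 c0 c * Psi (a, b, c).
have M1y : M1 *m y = 0.
  apply/colP => a; rewrite [RHS]mxE -[RHS](Phi_slice0 b0_lt b0c0 a) -MPsi !mxE ffunE /=.
  apply: eq_bigr => a' _; rewrite !mxE big_distrr; apply: eq_bigr => b _.
  by rewrite big_distrr; apply: eq_bigr => c _; rewrite /= !mulrA.
have y0 a : \sum_b \sum_c M2 b0 b * M3 c0 c * Psi (a, b, c) = 0.
  by have /colP /(_ a) := mulKmx u1 y; rewrite M1y mulmx0 !mxE.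
have [b1 M2b1 | M2_row0] := pickP [pred b | M2 b0 b != 0].
  exact: (Psi_contract_support M2b1 y0).
by exfalso; apply: (unitmx_row_nonzero u2 (i := b0)) => b; apply/eqP/negbFE/M2_row0.
Qed.

(* If k >= d3, the zeros of
   transform_row_zeros fill column 0 of M3; if k < d3, they force rows 0 and
   d3 - 1 of M3 to be supported in column d3 - 1 (using b0 = 0 and b0 = 1 < k). *)
Lemma Psi_not_to_Phi (M1 : 'M[C]_d1) (M2 : 'M[C]_d2) (M3 : 'M[C]_d3) :
  M1 \in unitmx -> M2 \in unitmx -> M3 \in unitmx -> tapply M1 M2 M3 Psi <> Phi.
Proof.
move=> u1 u2 u3 MPsi; have zeros := transform_row_zeros u1 u2 MPsi.
have d3p : (0 < d3)%N by lia.
have [k_ge_d3 | k_lt_d3] := leqP d3 (d2 * d3 - d1).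
  apply: (unitmx_col_nonzero u3 (j := Ordinal d3p)) => c0.
  have b0_lt : ((d3 - c0) %% d3 < d2)%N by apply: leq_trans (ltn_pmod _ d3p) d3_le_d2.
  apply: (zeros (Ordinal b0_lt)) => /=; last by rewrite mul1n.
    exact: leq_trans (ltn_pmod _ d3p) k_ge_d3.
  by rewrite modnDml subnK ?modnn // ltnW.
have last_lt : (d3 - 1 < d3)%N by lia.
have one_lt : (1 < d2)%N by lia.
have low_blocks (j : 'I_d3) : j != Ordinal last_lt -> (j.+1 * d2 <= d1)%N.
  rewrite -(inj_eq val_inj) /= => ne; have : (j.+1 * d2 <= (d3 - 1) * d2)%N.
    by rewrite leq_mul2r; have := ltn_ord j; lia.
  by rewrite mulnBl mul1n; lia.
apply: (unitmx_rows_one_column u3 (i := Ordinal d3p) (i' := Ordinal last_lt)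
         (j0 := Ordinal last_lt)).
  by rewrite -(inj_eq val_inj) /=; lia.
move=> j /low_blocks j_le; split.
  have d2p : (0 < d2)%N by lia.
  by apply: (zeros (Ordinal d2p)) => //=; [exact: ltnW k_gt1 | rewrite mod0n].
apply: (zeros (Ordinal one_lt)) => //=.
by rewrite subnKC ?modnn //; lia.
Qed.

End Construction.

Theorem mainTheorem5 (C : numClosedFieldType) (d1 d2 d3 : nat) :
  (2 <= d3)%N -> (d3 <= d2)%N -> (d2 <= d1)%N ->
  (1 < d2 * d3 - d1)%N ->
  exists Phi Psi : tensor3 C d1 d2 d3,
    [/\ slocc_maximal Phi, slocc_maximal Psi,
        ~ slocc_le Phi Psi & ~ slocc_le Psi Phi].
Proof.
move=> d3_ge2 d3_le_d2 d2_le_d1 k_gt1.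
have cPhi := Phi_concise C d3_ge2 d3_le_d2 d2_le_d1 k_gt1.
have cPsi := Psi_concise C d3_ge2 d3_le_d2 d2_le_d1 k_gt1.
have [Phi_not_le Psi_not_le] :=
  concise_incomparable cPhi cPsi (Psi_not_to_Phi d3_ge2 d3_le_d2 d2_le_d1 k_gt1).
exists (Phi C d1 d2 d3), (Psi C d1 d2 d3).
by split => //; exact: concise_slocc_maximal.
Qed.
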